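(* Let $K=\mathbf R$ or $\mathbf C$, let $V$ be an $n$-dimensional $K$-vector space with nondegenerate symmetric bilinear forms $b_0,b_1$, and let $f=(b_0^\dagger)^{-1}b_1^\dagger$ have a single Jordan block, with eigenvalue $\lambda$. Let $\mathbf e$ be a basis of $V$ and $\varepsilon\in\mathfrak c$ with $[f]_{\mathbf e}=J_n(\lambda)$ and $[b_0]_{\mathbf e}=\varepsilon C_n$. Let $\mathbf v$ be a basis of $V$ and $\eta\in\mathfrak c$ such that, in the dual basis $\mathbf v^*$ of $V^*$, $[b_1^*]_{\mathbf v^*}=\eta C_n$ and $[b_0^*]_{\mathbf v^*}=\eta C_nJ_n(\lambda)$. Let $\Phi$ be the matrix with $\mathbf e=\mathbf v\Phi$. Then: (1) if $K=\mathbf R$, $\varepsilon\eta\lambda>0$; (2) up to sign, $$\Phi=\sqrt{\varepsilon\eta\lambda}\sum_{\ell=0}^{n}a_\ell\lambda^{-\ell}C_nN^\ell,$$ where $\sum_\ell a_\ell t^\ell$ is the Taylor series of $(1+t)^{1/2}$, i.e. $a_\ell=\prod_{j=0}^{\ell-1}(1/2-j)/\ell!$, and $\sqrt{\varepsilon\eta\lambda}$ is a square root of $\varepsilon\eta\lambda$.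
   Context: $\mathfrak c=\{\pm1\}$ if $K=\mathbf R$ and $\mathfrak c=\{1\}$ if $K=\mathbf C$. $b_i^\dagger\colon V\to V^*$, $b_i^\dagger(x)(y)=b_i(x,y)$. The forms $b_i^*$ on $V^*$ are defined by $(b_i^* )^\dagger=(b_i^\dagger)^{-1}$. $C_n=(\delta_{n+1,i+j})$ is the antidiagonal matrix, $N=(\delta_{i+1,j})$ the regular nilpotent matrix, and $J_n(\lambda)=\lambda\mathrm{Id}+N$. *)

From HB Require Import structures.
From mathcomp Require Import all_boot all_order all_algebra.
From mathcomp Require Import complex.
Set Implicit Arguments. Unset Strict Implicit. Unset Printing Implicit Defensive.
Import Order.TTheory GRing.Theory Num.Theory.
Local Open Scope ring_scope.

(* Coordinates: V = K^n (column vectors); a basis is an invertible matrix whose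
   columns are the basis vectors; a bilinear form b is given by its Gram matrix B
   in the standard basis, b(x,y) = x^T B y. *)

Section A10Defs.
Variable K : fieldType.
Variable n : nat.

(* C_n = (delta_{n+1,i+j}) (1-indexed), i.e. i + j = n - 1 (0-indexed) *)
Definition antidiag : 'M[K]_n := \matrix_(i < n, j < n) ((i + j == n.-1)%N)%:R.
Definition nilpN : 'M[K]_n := \matrix_(i < n, j < n) ((i.+1 == j)%N)%:R.
Definition jordan (lam : K) : 'M[K]_n := lam%:M + nilpN.

Definition gram (B P : 'M[K]_n) : 'M[K]_n := P^T *m B *m P.
(* matrix of f = (b0^dag)^{-1} b1^dag in the standard basis *)
Definition fmat (B0 B1 : 'M[K]_n) : 'M[K]_n := invmx B0 *m B1.
Definition endo_in (F P : 'M[K]_n) : 'M[K]_n := invmx P *m F *m P.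
(* b-star on the dual: (b-star)^dag = (b^dag)^{-1}, so in the standard dual basis its Gram
   matrix is B^{-1}; the dual basis of P has coordinate columns (P^{-1})^T. *)
Definition dual_gram (B P : 'M[K]_n) : 'M[K]_n := gram (invmx B) (invmx P)^T.

Definition nondeg_sym (B : 'M[K]_n) : Prop := B^T = B /\ B \in unitmx.

Definition A10_setting (B0 B1 E Vb : 'M[K]_n) (eps eta lam : K) : Prop :=
  [/\ nondeg_sym B0, nondeg_sym B1,
      (E \in unitmx /\ endo_in (fmat B0 B1) E = jordan lam),
      gram B0 E = eps *: antidiag &
      Vb \in unitmx /\
      (dual_gram B1 Vb = eta *: antidiag /\
       dual_gram B0 Vb = eta *: (antidiag *m jordan lam))].

Definition Phi (E Vb : 'M[K]_n) : 'M[K]_n := invmx Vb *m E.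

Definition sqrt_coef (l : nat) : K :=
  (\prod_(j < l) (2^-1 - j%:R)) / (l`!)%:R.

Definition A10_series (lam : K) : 'M[K]_n :=
  \sum_(l < n.+1) (sqrt_coef l * lam ^- l) *: (antidiag *m nilpN ^+ l).

End A10Defs.

From HB Require Import structures.
From mathcomp Require Import all_boot all_order all_algebra.
From mathcomp Require Import complex ring zify.
Set Implicit Arguments. Unset Strict Implicit. Unset Printing Implicit Defensive.
Import Order.TTheory GRing.Theory Num.Theory.
Local Open Scope ring_scope.

(* Write X for Phi, C for C_n, J for J_n(lam) and k = eps eta.  In the basis e
   the hypotheses become X^T C X = X C X^T = k C J, using C^2 = 1 and
   eps^2 = eta^2 = 1.  As C J C = J^T, the two congruences force Y = C X to
   commute with J, hence with N, so Y is a polynomial in N.  Such matrices are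
   persymmetric (C Y C = Y^T), which turns X^T C X = k C J into
   Y^2 = k J = k lam (1 + N / lam).  The truncated binomial series
   T = \sum_l a_l lam^-l N^l satisfies T^2 = 1 + N / lam, and a square root
   in the algebra generated by N with invertible constant term is unique up to
   sign, so Y = +- s T.  Over R, the constant term of Y is a nonzero real
   whose square is k lam, which is therefore positive. *)

Lemma horner_alg_take_poly (R : nzSemiRingType) (A : semiAlgType R) (x : A) k p :
  x ^+ k = 0 -> horner_alg x (take_poly k p) = horner_alg x p.
Proof.
move=> xk0; rewrite -{2}(poly_take_drop k p) rmorphD rmorphM rmorphXn /=.
by rewrite horner_algX xk0 mulr0 addr0.
Qed.

Section SqrtCoef.
Variable K : numFieldType.
Local Notation a := (sqrt_coef K).

Lemma sqrt_coef0 : a 0 = 1.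
Proof. by rewrite /sqrt_coef big_ord0 fact0 divr1. Qed.

Lemma sqrt_coefS l : l.+1%:R * a l.+1 = (2^-1 - l%:R) * a l.
Proof.
rewrite /sqrt_coef big_ord_recr /= factS natrM.
have lfact_neq0 : (l`!%:R : K) != 0 by rewrite pnatr_eq0 -lt0n fact_gt0.
by field; rewrite lfact_neq0 -(natrD _ 1) pnatr_eq0.
Qed.

Definition sqrt_coef_conv m : K := \sum_(j < m.+1) a j * a (m - j).

Lemma sqrt_coef_conv_weight m :
  2 * \sum_(j < m.+1) j%:R * (a j * a (m - j)) = m%:R * sqrt_coef_conv m.
Proof.
rewrite mulr_natl mulr2n {2}(reindex_inj rev_ord_inj) -big_split mulr_sumr /=.
apply: eq_bigr => j _; have j_lt := ltn_ord j.
rewrite subSS subKn; last by lia.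
by rewrite natrB; [ring | lia].
Qed.

(* With f = \sum_l a_l t^l one has (1 + t) f' = f / 2, so g = f^2 satisfies
   (1 + t) g' = g; this is that equation on coefficients. *)
Lemma sqrt_coef_convS m :
  m.+1%:R * sqrt_coef_conv m.+1 = (1 - m%:R) * sqrt_coef_conv m.
Proof.
rewrite -sqrt_coef_conv_weight big_ord_recl mul0r add0r.
under eq_bigr => j _ do rewrite lift0 subSS mulrA sqrt_coefS -mulrA.
under eq_bigr do rewrite mulrBl.
rewrite sumrB mulrBr sqrt_coef_conv_weight -mulr_sumr.
by rewrite /sqrt_coef_conv; field.
Qed.

Lemma sqrt_coef_convE m : sqrt_coef_conv m = (m <= 1)%:R.
Proof.
elim: m => [|m IH]; first by rewrite /sqrt_coef_conv big_ord1 sqrt_coef0 mulr1.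
apply: (mulfI (_ : m.+1%:R != 0)); first by rewrite pnatr_eq0.
rewrite sqrt_coef_convS IH.
by case: m {IH} => [|[|m]]; rewrite ?subr0 ?subrr ?mulr0 ?mul0r ?mulr1.
Qed.

Lemma sqrt_series_sqr (A : algType K) (x : A) k : x ^+ k = 0 ->
  (\sum_(l < k) a l *: x ^+ l) ^+ 2 = 1 + x.
Proof.
move=> xk0; pose p := \poly_(l < k) a l.
have -> : \sum_(l < k) a l *: x ^+ l = horner_alg x p.
  rewrite /p poly_def linear_sum; apply: eq_bigr => l _.
  by rewrite -mul_polyC rmorphM /= horner_algC rmorphXn /= horner_algX mulr_algl.
have take_sqr : take_poly k (p ^+ 2) = take_poly k (1 + 'X).
  apply/polyP => i; rewrite !coef_take_poly; case: ltnP => // ik.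
  rewrite expr2 coefM coefD coef1 coefX.
  transitivity (sqrt_coef_conv i).
    apply: eq_bigr => j _; have := ltn_ord j.
    by rewrite !coef_poly => j_le; rewrite !ifT //; lia.
  by rewrite sqrt_coef_convE; case: i {ik} => [|[|i]]; rewrite ?addr0 ?add0r.
transitivity (horner_alg x (take_poly k (p ^+ 2))).
  by rewrite horner_alg_take_poly // rmorphXn.
by rewrite take_sqr horner_alg_take_poly // rmorphD rmorph1 /= horner_algX.
Qed.

End SqrtCoef.

Lemma invmx_left_inverse (R : comUnitRingType) n (A B : 'M[R]_n) :
  B *m A = 1%:M -> invmx A = B.
Proof.
move=> BA1; have [_ uA] := mulmx1_unit BA1.
by rewrite -[invmx A]mul1mx -BA1 -mulmxA mulmxV // mulmx1.
Qed.

Section AntidiagNilpotent.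
Variables (K : fieldType) (n : nat).
Local Notation C := (antidiag K n).
Local Notation N := (nilpN K n).

Lemma mul_antidiag_mx (A : 'M[K]_n) : C *m A = \matrix_(i, j) A (rev_ord i) j.
Proof.
apply/matrixP => i j; rewrite !mxE (bigD1 (rev_ord i)) //= big1 ?addr0.
  rewrite mxE /=.
  have -> : (i + (n - i.+1) == n.-1)%N by apply/eqP; have := ltn_ord i; lia.
  by rewrite mul1r.
move=> k k_neq; rewrite mxE; case: eqP => [ik|]; last by rewrite mul0r.
by case/eqP: k_neq; apply/val_inj => /=; have := ltn_ord i; lia.
Qed.

Lemma mul_mx_antidiag (A : 'M[K]_n) : A *m C = \matrix_(i, j) A i (rev_ord j).
Proof.
apply/matrixP => i j; rewrite !mxE (bigD1 (rev_ord j)) //= big1 ?addr0.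
  rewrite mxE /=.
  have -> : (n - j.+1 + j == n.-1)%N by apply/eqP; have := ltn_ord j; lia.
  by rewrite mulr1.
move=> k k_neq; rewrite mxE; case: eqP => [kj|]; last by rewrite mulr0.
by case/eqP: k_neq; apply/val_inj => /=; have := ltn_ord j; lia.
Qed.

Lemma antidiag_sqr : C *m C = 1%:M.
Proof.
rewrite mul_antidiag_mx; apply/matrixP => i j; rewrite !mxE /=.
have := ltn_ord i; have := ltn_ord j => j_lt i_lt.
by congr (_%:R); rewrite -(inj_eq val_inj) /=; apply/eqP/eqP; lia.
Qed.

Lemma tr_antidiag : C^T = C.
Proof. by apply/matrixP => i j; rewrite !mxE addnC. Qed.

Lemma nilpNXE l (i j : 'I_n) : (N ^+ l) i j = (i + l == j)%N%:R.
Proof.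
elim: l i j => [|l IH] i j; first by rewrite expr0 !mxE addn0.
rewrite exprSr mxE; have := ltn_ord j => j_lt.
case: (ltnP (i + l) n) => [il_lt|il_ge]; last first.
  rewrite big1 => [|k _]; first by case: eqP => //; lia.
  by rewrite IH; case: eqP => [|_]; [have := ltn_ord k; lia | rewrite mul0r].
rewrite (bigD1 (Ordinal il_lt)) //= big1 ?addr0.
  by rewrite IH !mxE eqxx mul1r /= addnS.
move=> k k_neq; rewrite IH; case: eqP => [ilk|]; last by rewrite mul0r.
by case/eqP: k_neq; apply/val_inj.
Qed.

Lemma nilpN_nilpotent : N ^+ n = 0.
Proof.
by apply/matrixP => i j; rewrite nilpNXE !mxE; case: eqP => //; have := ltn_ord j; lia.
Qed.

Lemma antidiag_conj_nilpNX l : C *m N ^+ l *m C = (N ^+ l)^T.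
Proof.
rewrite mul_mx_antidiag mul_antidiag_mx; apply/matrixP => i j; rewrite !mxE !nilpNXE /=.
have := ltn_ord i; have := ltn_ord j => j_lt i_lt.
by congr (_%:R); apply/eqP/eqP; lia.
Qed.

Lemma antidiag_conj_jordan lam : C *m jordan n lam *m C = (jordan n lam)^T.
Proof.
rewrite /jordan mulmxDr mulmxDl mul_mx_scalar -scalemxAl antidiag_sqr.
by rewrite scale_scalar_mx mulr1 -[N]expr1 antidiag_conj_nilpNX linearD /= tr_scalar_mx.
Qed.

Lemma jordan_commute_nilpN lam (Y : 'M[K]_n) :
  Y *m jordan n lam = jordan n lam *m Y -> Y *m N = N *m Y.
Proof. by rewrite /jordan mulmxDr mulmxDl scalar_mxC => /addrI. Qed.

Definition poly_nilpN (c : nat -> K) : 'M[K]_n := \sum_(l < n) c l *: N ^+ l.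

Lemma poly_nilpNE c (i j : 'I_n) :
  poly_nilpN c i j = if (i <= j)%N then c (j - i)%N else 0.
Proof.
rewrite /poly_nilpN summxE; have := ltn_ord j => j_lt.
case: leqP => [ij|ji]; last first.
  rewrite big1 // => l _; rewrite mxE nilpNXE.
  by case: eqP => [|_]; [lia | rewrite mulr0].
have ji_lt : (j - i < n)%N by lia.
rewrite (bigD1 (Ordinal ji_lt)) //= big1 ?addr0.
  by rewrite mxE nilpNXE subnKC // eqxx mulr1.
move=> l l_neq; rewrite mxE nilpNXE; case: eqP => [ilj|]; last by rewrite mulr0.
by case/eqP: l_neq; apply/val_inj => /=; lia.
Qed.

Lemma poly_nilpN_commX c l : poly_nilpN c *m N ^+ l = N ^+ l *m poly_nilpN c.
Proof.
rewrite /poly_nilpN mulmx_suml mulmx_sumr; apply: eq_bigr => k _.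
by rewrite -scalemxAl -scalemxAr !mulmxE -!exprD addnC.
Qed.

Lemma poly_nilpN_comm c d :
  poly_nilpN c *m poly_nilpN d = poly_nilpN d *m poly_nilpN c.
Proof.
rewrite {1}/poly_nilpN mulmx_suml [RHS]mulmx_sumr; apply: eq_bigr => k _.
by rewrite -scalemxAr -scalemxAl poly_nilpN_commX.
Qed.

Lemma poly_nilpND c d :
  poly_nilpN (fun l => c l + d l) = poly_nilpN c + poly_nilpN d.
Proof. by rewrite /poly_nilpN -big_split; apply: eq_bigr => l _; rewrite scalerDl. Qed.

Lemma poly_nilpNB c d :
  poly_nilpN (fun l => c l - d l) = poly_nilpN c - poly_nilpN d.
Proof. by rewrite /poly_nilpN -sumrB; apply: eq_bigr => l _; rewrite scalerBl. Qed.

Lemma poly_nilpNZ a c : poly_nilpN (fun l => a * c l) = a *: poly_nilpN c.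
Proof. by rewrite /poly_nilpN scaler_sumr; apply: eq_bigr => l _; rewrite scalerA. Qed.

Lemma antidiag_conj_poly_nilpN c : C *m poly_nilpN c *m C = (poly_nilpN c)^T.
Proof.
rewrite /poly_nilpN mulmx_sumr mulmx_suml raddf_sum; apply: eq_bigr => l _.
by rewrite -scalemxAr -scalemxAl antidiag_conj_nilpNX; apply/matrixP => i j; rewrite !mxE.
Qed.

Lemma det_poly_nilpN c : \det (poly_nilpN c) = c 0%N ^+ n.
Proof.
rewrite -det_tr det_trig; last first.
  by apply/is_trig_mxP => i j ij; rewrite mxE poly_nilpNE leqNgt ij.
under eq_bigr do rewrite mxE poly_nilpNE leqnn subnn.
by rewrite prodr_const card_ord.
Qed.

Lemma poly_nilpN_mul_diag c d (i : 'I_n) :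
  (poly_nilpN c *m poly_nilpN d) i i = c 0%N * d 0%N.
Proof.
rewrite mxE (bigD1 i) //= big1 ?addr0; first by rewrite !poly_nilpNE leqnn subnn.
move=> k k_neq; rewrite !poly_nilpNE.
case: (leqP i k) => ik; case: (leqP k i) => ki; rewrite ?mulr0 ?mul0r //.
by case/eqP: k_neq; apply/val_inj => /=; lia.
Qed.

Lemma A10_series_poly_nilpN lam :
  A10_series n lam = C *m poly_nilpN (fun l => sqrt_coef K l * lam ^- l).
Proof.
rewrite /A10_series big_ord_recr /= nilpN_nilpotent mulmx0 scaler0 addr0.
by rewrite /poly_nilpN mulmx_sumr; apply: eq_bigr => l _; rewrite scalemxAr.
Qed.

End AntidiagNilpotent.

Section Gram.
Variables (K : fieldType) (n : nat).
Local Notation C := (antidiag K n).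

Lemma gramM (B P Q : 'M[K]_n) : gram B (P *m Q) = gram (gram B P) Q.
Proof. by rewrite /gram trmx_mul !mulmxA. Qed.

Lemma gramZ a (B P : 'M[K]_n) : gram (a *: B) P = a *: gram B P.
Proof. by rewrite /gram -scalemxAr -scalemxAl. Qed.

Lemma unitmx_gram (B P : 'M[K]_n) :
  B \in unitmx -> P \in unitmx -> gram B P \in unitmx.
Proof. by move=> uB uP; rewrite !unitmx_mul unitmx_tr uB uP. Qed.

Lemma invmx_gram (B P : 'M[K]_n) :
  B \in unitmx -> P \in unitmx -> invmx (gram B P) = dual_gram B P.
Proof.
move=> uB uP; apply: invmx_left_inverse.
rewrite /dual_gram /gram trmxK !mulmxA -(mulmxA _ _ P^T) -trmx_mul mulmxV //.
by rewrite trmx1 mulmx1 (mulmxKV uB) mulVmx.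
Qed.

Lemma dual_gram_invmx (B P : 'M[K]_n) : dual_gram B (invmx P) = gram (invmx B) P^T.
Proof. by rewrite /dual_gram invmxK. Qed.

Lemma gram_endo_fmat (B0 B1 E : 'M[K]_n) : B0 \in unitmx -> E \in unitmx ->
  gram B1 E = gram B0 E *m endo_in (fmat B0 B1) E.
Proof.
by move=> uB0 uE; rewrite /gram /endo_in /fmat !mulmxA (mulmxK uE) (mulmxK uB0).
Qed.

Lemma invmx_antidiagZ e : e ^+ 2 = 1 -> invmx (e *: C) = e *: C.
Proof.
move=> e2; apply: invmx_left_inverse.
by rewrite -scalemxAl -scalemxAr scalerA -expr2 e2 scale1r antidiag_sqr.
Qed.

Lemma unitmx_Phi (E Vb : 'M[K]_n) :
  E \in unitmx -> Vb \in unitmx -> Phi E Vb \in unitmx.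
Proof. by move=> uE uVb; rewrite unitmx_mul unitmx_inv uVb uE. Qed.

Lemma A10_gram_Phi B0 B1 E Vb eps eta lam :
  eps ^+ 2 = 1 -> eta ^+ 2 = 1 -> A10_setting B0 B1 E Vb eps eta lam ->
  gram C (Phi E Vb) = (eps * eta) *: (C *m jordan n lam) /\
  gram C (Phi E Vb)^T = (eps * eta) *: (C *m jordan n lam).
Proof.
move=> eps2 eta2 [[_ uB0] [_ uB1] [uE fJ] gB0E [uVb [dB1 dB0]]].
set X := Phi E Vb.
have uX : X \in unitmx by exact: unitmx_Phi.
have EVbX : E = Vb *m X by rewrite /X /Phi mulKVmx.
have VbEX : Vb = E *m invmx X by rewrite EVbX mulmxK.
have gB1Vb : gram B1 Vb = eta *: C.
  by rewrite -[gram B1 Vb]invmxK invmx_gram // dB1 invmx_antidiagZ.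
have unscale e (A B : 'M[K]_n) : e ^+ 2 = 1 -> e *: A = B -> A = e *: B.
  by move=> e2 <-; rewrite scalerA -expr2 e2 scale1r.
split.
  rewrite mulrC -scalerA; apply: (unscale eta) => //.
  by rewrite -gramZ -gB1Vb -gramM -EVbX (gram_endo_fmat B1 uB0 uE) fJ gB0E scalemxAl.
rewrite -scalerA; apply: (unscale eps) => //.
rewrite -dB0 -invmx_gram // VbEX gramM invmx_gram ?unitmx_gram ?unitmx_inv //.
by rewrite gB0E dual_gram_invmx invmx_antidiagZ // gramZ.
Qed.

Lemma antidiag_gram_commute_jordan k lam (X : 'M[K]_n) : k ^+ 2 = 1 ->
  gram C X = k *: (C *m jordan n lam) -> gram C X^T = k *: (C *m jordan n lam) ->
  (C *m X) *m jordan n lam = jordan n lam *m (C *m X).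
Proof.
move=> k2 gX gXT.
have J_gram : jordan n lam = k *: (C *m gram C X).
  by rewrite gX -scalemxAr scalerA -expr2 k2 scale1r mulmxA antidiag_sqr mul1mx.
have XJ : X *m jordan n lam = (jordan n lam)^T *m X.
  have XCXT : X *m C *m X^T = k *: (C *m jordan n lam) by rewrite -gXT /gram trmxK.
  rewrite {1}J_gram -scalemxAr /gram !mulmxA XCXT -!scalemxAl scalerA -expr2 k2.
  by rewrite scale1r antidiag_conj_jordan.
by rewrite -mulmxA XJ -antidiag_conj_jordan !mulmxA antidiag_sqr mul1mx.
Qed.

Lemma antidiag_gram_poly_nilpN_sqr k lam (X : 'M[K]_n) (c : nat -> K) :
  C *m X = poly_nilpN n c -> gram C X = k *: (C *m jordan n lam) ->
  poly_nilpN n c ^+ 2 = k *: jordan n lam.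
Proof.
move=> CX gX.
have XCY : X = C *m poly_nilpN n c by rewrite -CX mulmxA antidiag_sqr mul1mx.
have XTCY : X^T = C *m poly_nilpN n c.
  rewrite XCY trmx_mul tr_antidiag -antidiag_conj_poly_nilpN.
  by rewrite -(mulmxA _ C C) antidiag_sqr mulmx1.
have : C *m (poly_nilpN n c *m poly_nilpN n c) = C *m (k *: jordan n lam).
  rewrite -scalemxAr -gX /gram XTCY XCY.
  by rewrite -!mulmxA (mulmxA C C) antidiag_sqr mul1mx.
by move/(congr1 (mulmx C)); rewrite !mulmxA antidiag_sqr !mul1mx expr2 mulmxE.
Qed.

End Gram.

Section PolyNilpNSquareRoots.
Variables (K : fieldType) (m : nat).
Local Notation n := m.+1.
Local Notation C := (antidiag K n).
Local Notation N := (nilpN K n).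

Lemma delta_mx_nilpNX (i : 'I_n) :
  delta_mx 0 i = delta_mx 0 ord0 *m N ^+ i :> 'rV[K]_n.
Proof. by apply/rowP => j; rewrite -rowE !mxE nilpNXE eqxx /= eq_sym. Qed.

Lemma row_commute_nilpN (Y : 'M[K]_n) i :
  Y *m N = N *m Y -> row i Y = row ord0 Y *m N ^+ i.
Proof.
move=> YN; have YNi : Y *m N ^+ i = N ^+ i *m Y.
  by rewrite mulmxE; apply: commrX; rewrite /GRing.comm -!mulmxE.
by rewrite !rowE delta_mx_nilpNX -mulmxA -YNi mulmxA.
Qed.

Lemma commute_nilpN_poly (Y : 'M[K]_n) :
  Y *m N = N *m Y -> Y = poly_nilpN n (fun l => Y ord0 (inord l)).
Proof.
move=> YN; set c := fun l => _; set P := poly_nilpN n c.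
have PN : P *m N = N *m P by have := poly_nilpN_commX n c 1; rewrite expr1.
apply/row_matrixP => i; rewrite (row_commute_nilpN i YN) (row_commute_nilpN i PN).
by congr (_ *m _); apply/rowP => j; rewrite !mxE poly_nilpNE /= subn0 /c inord_val.
Qed.

Lemma unitmx_poly_nilpN (c : nat -> K) : (poly_nilpN n c \in unitmx) = (c 0%N != 0).
Proof. by rewrite unitmxE det_poly_nilpN unitfE expf_eq0. Qed.

Lemma poly_nilpN_sqr_eq (c d : nat -> K) : (2 : K) != 0 -> c 0%N != 0 ->
  poly_nilpN n c ^+ 2 = poly_nilpN n d ^+ 2 ->
  poly_nilpN n c = poly_nilpN n d \/ poly_nilpN n c = - poly_nilpN n d.
Proof.
move=> two_neq0 c0_neq0 sqr_eq.
have c0_sqr : c 0%N ^+ 2 = d 0%N ^+ 2.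
  rewrite !expr2 -(poly_nilpN_mul_diag c c (ord0 : 'I_n)).
  by rewrite -(poly_nilpN_mul_diag d d (ord0 : 'I_n)) mulmxE -!expr2 sqr_eq.
set Y := poly_nilpN n c in sqr_eq *; set Z := poly_nilpN n d in sqr_eq *.
have YZ : Y *m Z = Z *m Y by exact: poly_nilpN_comm.
have sqr_eq' : Y *m Y = Z *m Z by rewrite mulmxE -!expr2.
have mulmx_poly_eq0 (Q : 'M[K]_n) e : Q *m poly_nilpN n e = 0 -> e 0%N != 0 -> Q = 0.
  move=> QP0 e0; rewrite -[Q](mulmxK (_ : poly_nilpN n e \in unitmx)) ?QP0 ?mul0mx //.
  by rewrite unitmx_poly_nilpN.
(* (Y - Z) (Y + Z) = 0 = (Y + Z) (Y - Z), and whichever of Y + Z, Y - Z has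
   constant term 2 c 0 is invertible. *)
move/eqP: c0_sqr; rewrite -subr_eq0 subr_sqr mulf_eq0 => /orP [|] /eqP c0_eq.
  left; apply/eqP; rewrite -subr_eq0; apply/eqP/(mulmx_poly_eq0 _ (fun l => c l + d l)).
    by rewrite poly_nilpND mulmxDr !mulmxBl sqr_eq' YZ addrA subrK subrr.
  by rewrite -(subr0_eq c0_eq) -mulr2n -mulr_natl mulf_neq0.
right; apply/eqP; rewrite -addr_eq0; apply/eqP/(mulmx_poly_eq0 _ (fun l => c l - d l)).
  by rewrite poly_nilpNB mulmxBr !mulmxDl sqr_eq' YZ [Z *m Y + _]addrC subrr.
by rewrite -(addr0_eq c0_eq) opprK -mulr2n -mulr_natl mulf_neq0.
Qed.

Lemma A10_Phi_poly_nilpN (B0 B1 E Vb : 'M[K]_n) eps eta lam :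
  eps ^+ 2 = 1 -> eta ^+ 2 = 1 -> A10_setting B0 B1 E Vb eps eta lam ->
  exists c, [/\ C *m Phi E Vb = poly_nilpN n c, c 0%N != 0,
    c 0%N ^+ 2 = eps * eta * lam & poly_nilpN n c ^+ 2 = (eps * eta) *: jordan n lam].
Proof.
move=> eps2 eta2 setting; have [gX gXT] := A10_gram_Phi eps2 eta2 setting.
have k2 : (eps * eta) ^+ 2 = 1 by rewrite exprMn eps2 eta2 mulr1.
have CXN : (C *m Phi E Vb) *m N = N *m (C *m Phi E Vb).
  exact/jordan_commute_nilpN/(antidiag_gram_commute_jordan k2 gX gXT).
have CX := commute_nilpN_poly CXN.
set c := fun l => _ in CX; have c_sqr := antidiag_gram_poly_nilpN_sqr CX gX.
have uCX : C *m Phi E Vb \in unitmx.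
  have [[_ uB0] _ [uE _] _ [uVb _]] := setting.
  by rewrite unitmx_mul unitmx_Phi // andbT; have [] := mulmx1_unit (antidiag_sqr K n).
exists c; split=> //; first by rewrite -unitmx_poly_nilpN -CX.
have := congr1 (fun M : 'M[K]_n => M ord0 ord0) c_sqr.
rewrite /= expr2 -mulmxE poly_nilpN_mul_diag -expr2 => ->.
by rewrite /jordan !mxE eqxx /= mulr1n addr0.
Qed.

End PolyNilpNSquareRoots.

Section A10.
Variables (K : numFieldType) (m : nat).
Local Notation n := m.+1.
Local Notation C := (antidiag K n).
Local Notation N := (nilpN K n).

Lemma sqrt_poly_nilpN lam : lam != 0 ->
  poly_nilpN n (fun l => sqrt_coef K l * lam ^- l) ^+ 2 = lam^-1 *: jordan n lam.
Proof.
move=> lam_neq0.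
have -> : poly_nilpN n (fun l => sqrt_coef K l * lam ^- l) =
          \sum_(l < n) sqrt_coef K l *: (lam^-1 *: N) ^+ l.
  by apply: eq_bigr => l _; rewrite exprZn scalerA exprVn.
rewrite sqrt_series_sqr; last by rewrite exprZn nilpN_nilpotent scaler0.
by rewrite /jordan scalerDr scale_scalar_mx mulVf.
Qed.

Lemma A10_Phi_eq (B0 B1 E Vb : 'M[K]_n) eps eta lam s :
  eps ^+ 2 = 1 -> eta ^+ 2 = 1 -> A10_setting B0 B1 E Vb eps eta lam ->
  s ^+ 2 = eps * eta * lam ->
  Phi E Vb = s *: A10_series n lam \/ Phi E Vb = - (s *: A10_series n lam).
Proof.
move=> eps2 eta2 setting s_sqr.
have [c [CX c0_neq0 c0_sqr c_sqr]] := A10_Phi_poly_nilpN eps2 eta2 setting.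
have lam_neq0 : lam != 0.
  by apply: contraNneq c0_neq0 => lam0; rewrite -sqrf_eq0 c0_sqr lam0 mulr0.
set t := fun l => sqrt_coef K l * lam ^- l.
have st_sqr : poly_nilpN n (fun l => s * t l) ^+ 2 = (eps * eta) *: jordan n lam.
  by rewrite poly_nilpNZ exprZn sqrt_poly_nilpN // scalerA s_sqr mulfK.
have two_neq0 : (2 : K) != 0 by rewrite pnatr_eq0.
have PhiC : Phi E Vb = C *m poly_nilpN n c by rewrite -CX mulmxA antidiag_sqr mul1mx.
rewrite PhiC A10_series_poly_nilpN -/t.
have [->|->] := poly_nilpN_sqr_eq two_neq0 c0_neq0 (etrans c_sqr (esym st_sqr)).
  by left; rewrite poly_nilpNZ scalemxAr.
by right; rewrite poly_nilpNZ mulmxN scalemxAr.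
Qed.

End A10.

Lemma sign_sqr (R : ringType) (e : R) : e \in [:: 1; -1] -> e ^+ 2 = 1.
Proof. by rewrite !inE => /orP [] /eqP ->; rewrite ?sqrrN expr1n. Qed.

Theorem lemmaA10 :
  (* K = R (any real closed field, e.g. the reals), c = {1, -1} *)
  (forall (R : rcfType) (n : nat) (B0 B1 E Vb : 'M[R]_n) (eps eta lam : R),
     (0 < n)%N ->
     eps \in [:: 1; -1] -> eta \in [:: 1; -1] ->
     A10_setting B0 B1 E Vb eps eta lam ->
     0 < eps * eta * lam /\
     (forall s : R, s ^+ 2 = eps * eta * lam ->
        Phi E Vb = s *: A10_series n lam \/ Phi E Vb = - (s *: A10_series n lam)))
  /\
  (* K = C = R[i], c = {1} *)
  (forall (R : rcfType) (n : nat) (B0 B1 E Vb : 'M[R[i]]_n) (eps eta lam : R[i]),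
     (0 < n)%N ->
     eps = 1 -> eta = 1 ->
     A10_setting B0 B1 E Vb eps eta lam ->
     (forall s : R[i], s ^+ 2 = eps * eta * lam ->
        Phi E Vb = s *: A10_series n lam \/ Phi E Vb = - (s *: A10_series n lam))).
Proof.
split.
  move=> R [//|m] B0 B1 E Vb eps eta lam _ /sign_sqr eps2 /sign_sqr eta2 setting.
  have [c [_ c0_neq0 c0_sqr _]] := A10_Phi_poly_nilpN eps2 eta2 setting.
  split; last by move=> s; exact: A10_Phi_eq eps2 eta2 setting.
  by rewrite -c0_sqr exprn_even_gt0 //= c0_neq0 orbT.
move=> R [//|m] B0 B1 E Vb eps eta lam _ -> -> setting s.
exact: A10_Phi_eq (expr1n _ _) (expr1n _ _) setting.
Qed.
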